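(* Let $E\subseteq\mathbb{R}$ and let $f:E\to\mathbb{R}$ be Abel continuous on $E$. Then $f$ is continuous on $E$ in the ordinary sense.
   Context: A sequence $(p_n)_{n\ge 0}$ of real numbers is Abel convergent to $\ell\in\mathbb{R}$ if the series $\sum_{k=0}^{\infty}p_k x^k$ converges for every $0\le x<1$ and $\lim_{x\to 1^-}(1-x)\sum_{k=0}^{\infty}p_k x^k=\ell$. A function $f:E\to\mathbb{R}$ is Abel continuous on $E$ if for every sequence $(p_n)$ of points of $E$ that is Abel convergent to a point $\ell\in E$, the sequence $(f(p_n))$ is Abel convergent to $f(\ell)$. *)

From Stdlib Require Import Reals.
From Coquelicot Require Import Coquelicot.
Open Scope R_scope.

Definition abel_convergent (p : nat -> R) (l : R) : Prop :=
  (forall x : R, 0 <= x < 1 -> ex_series (fun k => p k * x ^ k)) /\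
  filterlim (fun x => (1 - x) * Series (fun k => p k * x ^ k))
            (at_left 1) (locally l).

(* f : E -> R (modelled as f : R -> R, only its values on E matter)
   is Abel continuous on E. *)
Definition abel_continuous_on (E : R -> Prop) (f : R -> R) : Prop :=
  forall (p : nat -> R) (l : R),
    (forall n, E (p n)) -> E l -> abel_convergent p l ->
    abel_convergent (fun n => f (p n)) (f l).

(* A sequence whose deviations from [l] are summable is Abel convergent to [l],
   since [(1 - x) sum p_k x^k - l = (1 - x) sum (p_k - l) x^k]. If [f] were
   discontinuous at [x0], there would be points [z] of [E] arbitrarily close to
   [x0] with, say, [f z >= f x0 + eps]; choosing them within [2^-n] of [x0]
   gives a sequence Abel convergent to [x0] whose images stay above
   [f x0 + eps], and since Abel limits preserve lower bounds the Abel limit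
   [f x0] of the images would be at least [f x0 + eps]. *)

From Stdlib Require Import Reals Lra Classical IndefiniteDescription.
From Coquelicot Require Import Coquelicot.
Open Scope R_scope.

Lemma ex_series_geom_unit (x : R) : 0 <= x < 1 -> ex_series (fun k => x ^ k).
Proof.
  intros Hx; exists (/ (1 - x)).
  apply is_series_geom; rewrite Rabs_pos_eq; lra.
Qed.

Lemma Series_geom_unit (x : R) : 0 <= x < 1 -> Series (fun k => x ^ k) = / (1 - x).
Proof. intros Hx; apply Series_geom; rewrite Rabs_pos_eq; lra. Qed.

Lemma at_left_1_witness (P : R -> Prop) : at_left 1 P -> exists x, 0 <= x < 1 /\ P x.
Proof.
  intros [e He].
  assert (He_pos := cond_pos e).
  set (x := Rmax 0 (1 - e / 2)).
  assert (Hx : 0 <= x < 1) by (split; [apply Rmax_l | apply Rmax_lub_lt; lra]).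
  exists x; split; [exact Hx|].
  apply He; [|lra].
  change (Rabs (x - 1) < e).
  assert (1 - e / 2 <= x) by apply Rmax_r.
  rewrite Rabs_left; lra.
Qed.

Lemma filterlim_at_left_1_of_bound (h : R -> R) (l M : R) :
  (forall x, 0 <= x < 1 -> Rabs (h x - l) <= (1 - x) * M) ->
  filterlim h (at_left 1) (locally l).
Proof.
  intros Hh.
  assert (HM : 0 < Rabs M + 1) by (pose proof (Rabs_pos M); lra).
  apply filterlim_locally; intros eps.
  assert (Heps := cond_pos eps).
  set (d := Rmin (eps / (Rabs M + 1)) 1).
  assert (Hd_eps : d <= eps / (Rabs M + 1)) by apply Rmin_l.
  assert (Hd_1 : d <= 1) by apply Rmin_r.
  exists (mkposreal d ltac:(apply Rmin_pos; [apply Rdiv_lt_0_compat|]; lra)).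
  intros x Hnear Hx1.
  change (Rabs (x - 1) < d) in Hnear.
  change (Rabs (h x - l) < eps).
  rewrite Rabs_left in Hnear by lra.
  assert (Hx : 0 <= x < 1) by lra.
  apply Rle_lt_trans with ((1 - x) * (Rabs M + 1)).
  - eapply Rle_trans; [exact (Hh x Hx)|].
    apply Rmult_le_compat_l; [lra|].
    pose proof (Rle_abs M); lra.
  - apply Rlt_le_trans with (eps / (Rabs M + 1) * (Rabs M + 1)).
    + apply Rmult_lt_compat_r; lra.
    + unfold Rdiv; rewrite Rmult_assoc, Rinv_l by lra; lra.
Qed.

Lemma Series_nonneg (a : nat -> R) :
  ex_series a -> (forall n, 0 <= a n) -> 0 <= Series a.
Proof.
  intros Hex Ha.
  rewrite <- (Rmult_0_l (Series a)), <- Series_scal_l.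
  apply Series_le; [|exact Hex].
  intros n; specialize (Ha n); lra.
Qed.

Lemma ex_series_sub_const (p : nat -> R) (c x : R) :
  0 <= x < 1 ->
  ex_series (fun k => p k * x ^ k) <-> ex_series (fun k => (p k - c) * x ^ k).
Proof.
  intros Hx.
  assert (Hgeom : ex_series (fun k => c * x ^ k))
    by exact (ex_series_scal_l c _ (ex_series_geom_unit x Hx)).
  split; intros Hex.
  - eapply ex_series_ext; [|exact (ex_series_minus _ _ Hex Hgeom)].
    intros k; unfold minus, plus, opp; simpl; ring.
  - eapply ex_series_ext; [|exact (ex_series_plus _ _ Hex Hgeom)].
    intros k; unfold plus; simpl; ring.
Qed.

Lemma abel_mean_sub_const (p : nat -> R) (c x : R) :
  0 <= x < 1 -> ex_series (fun k => p k * x ^ k) ->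
  (1 - x) * Series (fun k => p k * x ^ k) - c
  = (1 - x) * Series (fun k => (p k - c) * x ^ k).
Proof.
  intros Hx Hex.
  assert (Hgeom : ex_series (fun k => c * x ^ k))
    by exact (ex_series_scal_l c _ (ex_series_geom_unit x Hx)).
  rewrite (Series_ext (fun k => (p k - c) * x ^ k) (fun k => p k * x ^ k - c * x ^ k))
    by (intros; ring).
  rewrite (Series_minus _ _ Hex Hgeom), Series_scal_l, Series_geom_unit by exact Hx.
  field; lra.
Qed.

Lemma abel_convergent_of_summable (p : nat -> R) (l : R) :
  ex_series (fun k => Rabs (p k - l)) -> abel_convergent p l.
Proof.
  intros Hsum.
  assert (Hdom : forall x k, 0 <= x < 1 ->
            Rabs ((p k - l) * x ^ k) <= Rabs (p k - l)).
  { intros x k Hx.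
    rewrite Rabs_mult, (Rabs_pos_eq (x ^ k)) by (apply pow_le; lra).
    assert (x ^ k <= 1) by (rewrite <- (pow1 k); apply pow_incr; lra).
    assert (0 <= Rabs (p k - l)) by apply Rabs_pos.
    nra. }
  assert (Habs : forall x, 0 <= x < 1 ->
            ex_series (fun k => Rabs ((p k - l) * x ^ k))).
  { intros x Hx.
    apply (@ex_series_le R_AbsRing R_CompleteNormedModule _ (fun k => Rabs (p k - l)));
      [|exact Hsum].
    intros k; change (Rabs (Rabs ((p k - l) * x ^ k)) <= Rabs (p k - l)).
    rewrite Rabs_Rabsolu; exact (Hdom x k Hx). }
  assert (Hex : forall x, 0 <= x < 1 -> ex_series (fun k => p k * x ^ k)).
  { intros x Hx; apply (ex_series_sub_const p l x Hx).
    exact (ex_series_Rabs _ (Habs x Hx)). }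
  split; [exact Hex|].
  apply (filterlim_at_left_1_of_bound _ _ (Series (fun k => Rabs (p k - l)))).
  intros x Hx.
  rewrite (abel_mean_sub_const p l x Hx (Hex x Hx)), Rabs_mult, (Rabs_pos_eq (1 - x)) by lra.
  apply Rmult_le_compat_l; [lra|].
  eapply Rle_trans; [exact (Series_Rabs _ (Habs x Hx))|].
  apply Series_le; [|exact Hsum].
  intros k; split; [apply Rabs_pos | exact (Hdom x k Hx)].
Qed.

Lemma abel_convergent_opp (p : nat -> R) (l : R) :
  abel_convergent p l -> abel_convergent (fun n => - p n) (- l).
Proof.
  intros [Hex Hlim]; split.
  - intros x Hx.
    eapply ex_series_ext; [|exact (ex_series_opp _ (Hex x Hx))].
    intros k; unfold opp; simpl; ring.
  - apply (filterlim_ext (fun x => - ((1 - x) * Series (fun k => p k * x ^ k)))).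
    + intros x.
      rewrite (Series_ext (fun k => - p k * x ^ k) (fun k => - (p k * x ^ k)))
        by (intros; ring).
      rewrite Series_opp; ring.
    + eapply filterlim_comp; [exact Hlim | exact (filterlim_opp l)].
Qed.

Lemma abel_convergent_lb (p : nat -> R) (l c : R) :
  abel_convergent p l -> (forall n, c <= p n) -> c <= l.
Proof.
  intros [Hex Hlim] Hc.
  apply Rnot_lt_le; intros Hlt.
  apply filterlim_locally with (eps := mkposreal (c - l) ltac:(lra)) in Hlim.
  destruct (at_left_1_witness _ Hlim) as [x [Hx Hnear]].
  change (Rabs ((1 - x) * Series (fun k => p k * x ^ k) - l) < c - l) in Hnear.
  assert (Hmean : c <= (1 - x) * Series (fun k => p k * x ^ k)).
  { apply Rminus_le_0; rewrite (abel_mean_sub_const p c x Hx (Hex x Hx)).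
    apply Rmult_le_pos; [lra|].
    apply Series_nonneg; [exact (proj1 (ex_series_sub_const p c x Hx) (Hex x Hx))|].
    intros k; assert (0 <= x ^ k) by (apply pow_le; lra).
    specialize (Hc k); nra. }
  apply Rabs_def2 in Hnear; lra.
Qed.

Lemma abel_convergent_ub (p : nat -> R) (l c : R) :
  abel_convergent p l -> (forall n, p n <= c) -> l <= c.
Proof.
  intros Hp Hc.
  apply Ropp_le_cancel, (abel_convergent_lb _ _ _ (abel_convergent_opp p l Hp)).
  intros n; apply Ropp_le_contravar, Hc.
Qed.

Definition adherent (P : R -> Prop) (x0 : R) : Prop :=
  forall d, 0 < d -> exists z, P z /\ Rabs (z - x0) < d.

Lemma adherent_union (P Q S : R -> Prop) (x0 : R) :
  adherent S x0 -> (forall z, S z -> P z \/ Q z) -> adherent P x0 \/ adherent Q x0.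
Proof.
  intros HS HPQ.
  destruct (classic (adherent P x0)) as [HP|HnP]; [now left|right].
  unfold adherent in HnP.
  apply not_all_ex_not in HnP as [d0 HnP].
  apply imply_to_and in HnP as [Hd0 HnP].
  intros d Hd.
  destruct (HS (Rmin d d0) ltac:(now apply Rmin_pos)) as [z [Sz Hz]].
  assert (Rmin d d0 <= d) by apply Rmin_l.
  assert (Rmin d d0 <= d0) by apply Rmin_r.
  exists z; split; [|lra].
  destruct (HPQ z Sz) as [Pz|Qz]; [|exact Qz].
  exfalso; apply HnP; exists z; split; [exact Pz | lra].
Qed.

Lemma adherent_abel_convergent (P : R -> Prop) (x0 : R) :
  adherent P x0 -> exists y, (forall n, P (y n)) /\ abel_convergent y x0.
Proof.
  intros HP.
  destruct (functional_choice (fun n z => P z /\ Rabs (z - x0) < (1 / 2) ^ n))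
    as [y Hy].
  { intros n; apply HP, pow_lt; lra. }
  exists y; split; [intros n; apply Hy|].
  apply abel_convergent_of_summable.
  apply (@ex_series_le R_AbsRing R_CompleteNormedModule _ (fun n => (1 / 2) ^ n));
    [|apply ex_series_geom_unit; lra].
  intros n; change (Rabs (Rabs (y n - x0)) <= (1 / 2) ^ n).
  rewrite Rabs_Rabsolu; apply Rlt_le, Hy.
Qed.

Lemma not_continue_in_adherent (E : R -> Prop) (f : R -> R) (x0 : R) :
  ~ continue_in f E x0 ->
  exists eps, 0 < eps /\ adherent (fun z => E z /\ eps <= Rabs (f z - f x0)) x0.
Proof.
  intros Hnc.
  unfold continue_in, limit1_in, limit_in in Hnc.
  apply not_all_ex_not in Hnc as [eps Hnc].
  apply imply_to_and in Hnc as [Heps Hnc].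
  exists eps; split; [exact Heps|].
  intros d Hd; apply NNPP; intros Hno.
  apply Hnc; exists d; split; [exact Hd|].
  intros z [[Ez _] Hz]; simpl in *; unfold R_dist in *.
  apply Rnot_le_lt; intros Hfz.
  apply Hno; exists z; tauto.
Qed.

Lemma abel_continuous_along (E P : R -> Prop) (f : R -> R) (x0 : R) :
  abel_continuous_on E f -> E x0 -> (forall z, P z -> E z) -> adherent P x0 ->
  exists y, (forall n, P (y n)) /\ abel_convergent (fun n => f (y n)) (f x0).
Proof.
  intros Hf Hx0 HPE HP.
  destruct (adherent_abel_convergent P x0 HP) as [y [Hy Habel]].
  exists y; split; [exact Hy|].
  exact (Hf y x0 (fun n => HPE _ (Hy n)) Hx0 Habel).
Qed.

Theorem theorem1 (E : R -> Prop) (f : R -> R) :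
  abel_continuous_on E f -> forall x0 : R, E x0 -> continue_in f E x0.
Proof.
  intros Hf x0 Hx0.
  apply NNPP; intros Hnc.
  destruct (not_continue_in_adherent E f x0 Hnc) as [eps [Heps Hadh]].
  destruct (adherent_union (fun z => E z /\ f x0 + eps <= f z)
                           (fun z => E z /\ f z <= f x0 - eps) _ x0 Hadh)
    as [Habove|Hbelow].
  { intros z [Ez Hz]; revert Hz; unfold Rabs; destruct Rcase_abs; intros Hz;
      [right | left]; split; auto; lra. }
  - destruct (abel_continuous_along E _ f x0 Hf Hx0 (fun z Hz => proj1 Hz) Habove)
      as [y [Hy Habel]].
    assert (f x0 + eps <= f x0)
      by exact (abel_convergent_lb _ _ _ Habel (fun n => proj2 (Hy n))).
    lra.
  - destruct (abel_continuous_along E _ f x0 Hf Hx0 (fun z Hz => proj1 Hz) Hbelow)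
      as [y [Hy Habel]].
    assert (f x0 <= f x0 - eps)
      by exact (abel_convergent_ub _ _ _ Habel (fun n => proj2 (Hy n))).
    lra.
Qed.
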